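(* Let $\mathbf G=(G,\le,\cdot,/,0,1)$ be a left-residuated po-groupoid. Then $\mathbf G$ satisfies both the double negation law $\neg\neg x=x$ (for all $x$) and the condition $$\neg x/y\le \neg z\iff z\le x\cdot y\quad\text{for all }x,y,z\in G$$ if and only if $\mathbf G$ satisfies the equation $x\cdot y=\neg(\neg x/y)$ for all $x,y\in G$. Moreover, in this case, for all $x,y\in G$ we have $x\le y$ iff $\neg y\le \neg x$.
   Context: A (bounded integral) left-residuated po-groupoid is a structure $\mathbf G=(G,\le,\cdot,/,0,1)$ where $(G,\le,0,1)$ is a bounded poset with least element $0$ and greatest element $1$, $\cdot$ is a binary operation on $G$ with $1\cdot x=x\cdot 1=x$ for all $x$ (no associativity, commutativity or monotonicity is assumed), and $/$ is a binary operation on $G$ satisfying the left residuation law: for all $x,y,z\in G$, $x\cdot y\le z\iff x\le z/y$. The negation is defined by $\neg x:=0/x$. *)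

(* A bounded integral left-residuated po-groupoid (G, <=, *, /, 0, 1). *)
Record LRPoGroupoid := {
  car :> Type;
  le : car -> car -> Prop;
  mul : car -> car -> car;
  rdiv : car -> car -> car;
  bot : car;
  top : car;
  le_refl : forall x, le x x;
  le_antisym : forall x y, le x y -> le y x -> x = y;
  le_trans : forall x y z, le x y -> le y z -> le x z;
  bot_least : forall x, le bot x;
  top_greatest : forall x, le x top;
  mul_1l : forall x, mul top x = x;
  mul_1r : forall x, mul x top = x;
  residuation : forall x y z, le (mul x y) z <-> le x (rdiv z y)
}.

Definition neg (G : LRPoGroupoid) (x : G) : G := rdiv G (bot G) x.


(* If x y = ~(~x / y), then x = x 1 = ~~x, and x <= y gives ~y x = ~(y / x) = ~1 = 0,
   i.e. ~y <= 0 / x: negation is an antitone involution, hence an order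
   anti-automorphism, which is the Galois condition.  Conversely, that condition with
   x = 1 says that ~ reflects and reverses the order, and instantiated at z = x y and
   z = ~(~x / y) it yields the two inequalities between x y and ~(~x / y). *)

Section NegationCharacterisation.

Variable G : LRPoGroupoid.
Implicit Types a b x y z : G.

Lemma rdiv_top a : rdiv G a (top G) = a.
Proof.
  apply le_antisym.
  - rewrite <- (mul_1r G (rdiv G a (top G))). apply residuation, le_refl.
  - apply residuation. rewrite mul_1r. apply le_refl.
Qed.

Lemma neg_top : neg G (top G) = bot G.
Proof. apply rdiv_top. Qed.

Lemma rdiv_eq_top a b : le G a b -> rdiv G b a = top G.
Proof.
  intro Hab. apply le_antisym; [apply top_greatest|].
  apply residuation. rewrite mul_1l. exact Hab.
Qed.

Section FromMulNeg.

Hypothesis mul_neg : forall x y, mul G x y = neg G (rdiv G (neg G x) y).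

Lemma negK x : neg G (neg G x) = x.
Proof. rewrite <- (rdiv_top (neg G x)), <- mul_neg. apply mul_1r. Qed.

Lemma le_neg a b : le G a b -> le G (neg G b) (neg G a).
Proof.
  intro Hab. apply residuation.
  rewrite mul_neg, negK, (rdiv_eq_top _ _ Hab), neg_top. apply le_refl.
Qed.

Lemma le_neg2 a b : le G a b <-> le G (neg G b) (neg G a).
Proof.
  split; [apply le_neg|].
  intro Hba. rewrite <- (negK a), <- (negK b). apply le_neg, Hba.
Qed.

Lemma le_negC a z : le G a (neg G z) <-> le G z (neg G a).
Proof.
  split; intro H; [rewrite <- (negK z) | rewrite <- (negK a)]; apply le_neg, H.
Qed.

End FromMulNeg.

Section FromGalois.

Hypothesis neg_involutive : forall x, neg G (neg G x) = x.
Hypothesis galois : forall x y z,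
  le G (rdiv G (neg G x) y) (neg G z) <-> le G z (mul G x y).

Lemma le_neg2_galois a b : le G (neg G b) (neg G a) <-> le G a b.
Proof.
  pose proof (galois (top G) b a) as Htop.
  rewrite neg_top, mul_1l in Htop. exact Htop.
Qed.

Lemma mul_neg_galois x y : mul G x y = neg G (rdiv G (neg G x) y).
Proof.
  apply le_antisym.
  - rewrite <- (neg_involutive (mul G x y)). apply le_neg2_galois, galois, le_refl.
  - apply galois. rewrite neg_involutive. apply le_refl.
Qed.

End FromGalois.

End NegationCharacterisation.

Theorem lemma2 (G : LRPoGroupoid) :
  (((forall x : G, neg G (neg G x) = x) /\
    (forall x y z : G,
       le G (rdiv G (neg G x) y) (neg G z) <-> le G z (mul G x y)))
   <->
   (forall x y : G, mul G x y = neg G (rdiv G (neg G x) y)))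
  /\
  ((forall x y : G, mul G x y = neg G (rdiv G (neg G x) y)) ->
   forall x y : G, le G x y <-> le G (neg G y) (neg G x)).
Proof.
  split; [split|].
  - intros [neg_involutive galois]. exact (mul_neg_galois G neg_involutive galois).
  - intro mul_neg. split; [exact (negK G mul_neg)|].
    intros x y z. rewrite (mul_neg x y). apply le_negC, mul_neg.
  - exact (le_neg2 G).
Qed.
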